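(* Let $\boldsymbol{\tau} \colon \mathsf{BPT} \to \mathbb K$ be a weighted troupe. For $n \geq 1$, let \[\omega_n = \sum_{T \in \mathsf{Branch}_n} \boldsymbol{\tau}(T)\quad\text{and}\quad\check{\omega}_n = \sum_{T \in \mathsf{BPT}_n} \boldsymbol{\tau}(T).\] Then, the generating functions \[\mathscr{B}(t) = \sum_{n \geq 1} \omega_n t^n\quad\text{and}\quad \mathscr T(t) = \sum_{n \geq 1} \check{\omega}_n t^n\] satisfy \[\mathscr T(t) = \mathscr B\left(\frac{t}{1 - t\mathscr T(t)}\right).\]
   Context: $\mathbb K$ is a commutative ring. $\mathsf{BPT}$ is the set of binary plane trees (rooted trees where each child is designated left or right, each vertex having at most one left and one right child), including the empty tree $\varnothing$; $\mathsf{BPT}_n$ is the set of those with $n$ vertices. A branch is a nonempty binary plane tree in which every vertex has at most one child; $\mathsf{Branch}_n$ is the set of branches with $n$ vertices. For nonempty binary plane trees $T_1,T_2$ and a vertex $v$ of $T_1$, the insertion $\nabla_v(T_1,T_2)$ is obtained by extending $v$ into a left edge (identifying $v$ with the bottom vertex and calling the new upper vertex $v^*$) and attaching $T_2$ as the right subtree of $v^*$. A weighted troupe is a function $\boldsymbol{\tau}\colon\mathsf{BPT}\to\mathbb K$ with $\boldsymbol{\tau}(\varnothing)=0$ and $\boldsymbol{\tau}(\nabla_v(T_1,T_2))=\boldsymbol{\tau}(T_1)\boldsymbol{\tau}(T_2)$ for all $T_1,T_2$ and all vertices $v\in T_1$ (here with a single color, i.e. trees are uncolored). *)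

From mathcomp Require Import all_boot all_algebra.
Set Implicit Arguments. Unset Strict Implicit. Unset Printing Implicit Defensive.
Import GRing.Theory.
Local Open Scope ring_scope.

(* bLeaf is the empty tree; bNode l r is a root with left subtree l and
   right subtree r (an empty subtree means "no child on that side"). *)
Inductive bpt : Type := bLeaf | bNode of bpt & bpt.

Fixpoint bsize (T : bpt) : nat :=
  match T with bLeaf => 0%N | bNode l r => (bsize l + bsize r).+1 end.

Definition nonempty (T : bpt) : bool := if T is bNode _ _ then true else false.

Fixpoint allowed_branch (T : bpt) : bool :=
  match T with
  | bLeaf => true
  | bNode l r => ~~ (nonempty l && nonempty r) && allowed_branch l && allowed_branch r
  end.
Definition is_branch (T : bpt) : bool := nonempty T && allowed_branch T.

(* Vertices of T are addressed by paths from the root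
   (false = go to left child, true = go to right child). *)
Fixpoint subtree_at (T : bpt) (p : seq bool) : bpt :=
  match p, T with
  | [::], _ => T
  | b :: p', bNode l r => subtree_at (if b then r else l) p'
  | _ :: _, bLeaf => bLeaf
  end.
Definition is_vertex (T : bpt) (p : seq bool) : bool := nonempty (subtree_at T p).

(* insertion nabla_v(T1,T2): the vertex v (at path p) is extended into a left
   edge; the new upper vertex v* takes the place of v, v (with its subtrees)
   becomes the left child of v*, and T2 is the right subtree of v*. *)
Fixpoint insertion (T1 : bpt) (p : seq bool) (T2 : bpt) : bpt :=
  match p, T1 with
  | [::], U => bNode U T2
  | b :: p', bNode l r =>
      if b then bNode l (insertion r p' T2) else bNode (insertion l p' T2) r
  | _ :: _, bLeaf => bLeaf
  end.

Definition weighted_troupe (K : comPzRingType) (tau : bpt -> K) : Prop :=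
  tau bLeaf = 0 /\
  forall T1 T2 p, nonempty T1 -> nonempty T2 -> is_vertex T1 p ->
    tau (insertion T1 p T2) = tau T1 * tau T2.

Fixpoint trees_upto (h : nat) : seq bpt :=
  match h with
  | 0 => [:: bLeaf]
  | h'.+1 => bLeaf :: [seq bNode l r | l <- trees_upto h', r <- trees_upto h']
  end.

(* BPT_n and Branch_n (a tree with n vertices has height <= n) *)
Definition BPT_n (n : nat) : seq bpt := [seq T <- trees_upto n | bsize T == n].
Definition Branch_n (n : nat) : seq bpt := [seq T <- BPT_n n | is_branch T].

Definition fps (K : comPzRingType) := nat -> K.

Section FPS.
Variable K : comPzRingType.
Definition fps_one : fps K := fun n => (n == 0%N)%:R.
Definition fps_X : fps K := fun n => (n == 1%N)%:R.
Definition fps_sub (f g : fps K) : fps K := fun n => f n - g n.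
Definition fps_mul (f g : fps K) : fps K :=
  fun n => \sum_(i < n.+1) f i * g (n - i)%N.
Fixpoint fps_pow (f : fps K) (k : nat) : fps K :=
  match k with 0 => fps_one | k'.+1 => fps_mul f (fps_pow f k') end.
(* multiplicative inverse of f when f 0 = 1: 1/f = sum_j (1 - f)^j,
   a well-defined (coefficientwise finite) sum since (1 - f) has zero
   constant term *)
Definition fps_inv1 (f : fps K) : fps K :=
  fun n => \sum_(j < n.+1) fps_pow (fps_sub fps_one f) j n.
(* composition f(g), for g with zero constant term *)
Definition fps_comp (f g : fps K) : fps K :=
  fun n => \sum_(k < n.+1) f k * fps_pow g k n.
End FPS.

Definition branch_series (K : comPzRingType) (tau : bpt -> K) : fps K :=
  fun n => if n == 0%N then 0 else \sum_(T <- Branch_n n) tau T.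
Definition tree_series (K : comPzRingType) (tau : bpt -> K) : fps K :=
  fun n => if n == 0%N then 0 else \sum_(T <- BPT_n n) tau T.

From HB Require Import structures.
From mathcomp Require Import all_boot all_algebra zify.
From Stdlib Require Import FunctionalExtensionality.
Set Implicit Arguments. Unset Strict Implicit. Unset Printing Implicit Defensive.
Import GRing.Theory.
Local Open Scope ring_scope.

(* Cutting off the right subtree at every vertex with two children turns a
   nonempty tree T into a branch, its spine; T is recovered from its spine by
   insertions, so tau T is tau (spine T) times the weights of the cut subtrees.
   A tree with spine B = bNode Bl Br either has two children at the root, a left
   subtree with spine B and an arbitrary right subtree, or has the root of B as
   its root. Hence the weight series F of the trees with spine B satisfies
   F = t (F T + F'), F' the series of the branch below the root of B, so that
   F = (t / (1 - t T))^|B|. *)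

Fixpoint bpt_eqb (T1 T2 : bpt) : bool :=
  match T1, T2 with
  | bLeaf, bLeaf => true
  | bNode l r, bNode l' r' => bpt_eqb l l' && bpt_eqb r r'
  | _, _ => false
  end.

Lemma bpt_eqP : Equality.axiom bpt_eqb.
Proof.
elim=> [|l IHl r IHr] [|l' r'] /=; try by constructor.
by apply: (iffP andP) => [[/IHl -> /IHr ->] | [<- <-]]; split; [apply/IHl | apply/IHr].
Qed.

HB.instance Definition _ := hasDecEq.Build bpt bpt_eqP.

Fixpoint height (T : bpt) : nat :=
  match T with bLeaf => 0 | bNode l r => (maxn (height l) (height r)).+1 end.

Lemma height_le_bsize T : (height T <= bsize T)%N.
Proof. by elim: T => //= l IHl r IHr; rewrite ltnS geq_max; lia. Qed.

Lemma trees_uptoS h :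
  trees_upto h.+1 = bLeaf :: [seq bNode l r | l <- trees_upto h, r <- trees_upto h].
Proof. by []. Qed.

Lemma mem_trees_upto h T : (T \in trees_upto h) = (height T <= h)%N.
Proof.
elim: h T => [|h IH] [|l r] //=; rewrite in_cons /= ltnS geq_max -!IH.
apply/allpairsP/andP => [[[l' r'] /= [? ? [-> ->]]] // | [? ?]].
by exists (l, r).
Qed.

Lemma uniq_trees_upto h : uniq (trees_upto h).
Proof.
elim: h => //= h IH; apply/andP; split; first by apply/allpairsP => -[[? ?] [_ _]].
by apply: allpairs_uniq => // -[? ?] [? ?] _ _ /= [-> ->].
Qed.

Lemma mem_BPT_n n T : (T \in BPT_n n) = (bsize T == n).
Proof.
rewrite mem_filter mem_trees_upto andb_idr // => /eqP <-.
exact: height_le_bsize.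
Qed.

Lemma uniq_BPT_n n : uniq (BPT_n n).
Proof. by rewrite filter_uniq ?uniq_trees_upto. Qed.

Lemma mem_Branch_n n T : (T \in Branch_n n) = (bsize T == n) && is_branch T.
Proof. by rewrite mem_filter mem_BPT_n andbC. Qed.

Lemma uniq_Branch_n n : uniq (Branch_n n).
Proof. by rewrite filter_uniq ?uniq_BPT_n. Qed.

Lemma BPT_n0 : BPT_n 0 = [:: bLeaf].
Proof. by []. Qed.

Lemma nonemptyE T : nonempty T = (T != bLeaf).
Proof. by case: T. Qed.

Lemma nonempty_bsize T : nonempty T = (bsize T != 0).
Proof. by case: T. Qed.

Lemma nonempty_BPT_n n T : T \in BPT_n n -> nonempty T = (n != 0).
Proof. by rewrite mem_BPT_n nonempty_bsize => /eqP ->. Qed.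

Section BPTSums.
Variable K : comPzRingType.
Implicit Types F f g : bpt -> K.

Lemma big_BPT_n_upto h n F : (n <= h)%N ->
  \sum_(T <- BPT_n n) F T = \sum_(T <- trees_upto h) if bsize T == n then F T else 0.
Proof.
move=> le_nh; rewrite -big_mkcond -big_filter; apply: perm_big.
apply: uniq_perm; rewrite ?filter_uniq ?uniq_trees_upto // => T.
rewrite mem_BPT_n mem_filter mem_trees_upto [RHS]andb_idr // => /eqP Tn.
by rewrite (leq_trans (height_le_bsize T)) ?Tn.
Qed.

Lemma sum_if_eq_uniq (I : eqType) (s : seq I) (a : I) (y : K) : uniq s ->
  \sum_(x <- s) (if a == x then y else 0) = if a \in s then y else 0.
Proof.
move=> uniq_s; case: ifP => [a_s | a_notin_s].
  rewrite (bigD1_seq a) //= eqxx big1 ?addr0 // => x.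
  by rewrite eq_sym => /negbTE ->.
rewrite big1_seq // => x /andP[_ x_s]; case: eqP => // a_x.
by move: a_notin_s; rewrite a_x x_s.
Qed.

Lemma big_BPT_nS F m :
  \sum_(T <- BPT_n m.+1) F T =
  \sum_(i < m.+1) \sum_(l <- BPT_n i) \sum_(r <- BPT_n (m - i)) F (bNode l r).
Proof.
have if_sum (b : bool) (G : bpt -> K) s :
    (if b then \sum_(r <- s) G r else 0) = \sum_(r <- s) if b then G r else 0.
  by case: b => //; rewrite big1.
have split_size l r : \sum_(i < m.+1)
    (if bsize l == i then if bsize r == (m - i)%N then F (bNode l r) else 0 else 0) =
    if bsize (bNode l r) == m.+1 then F (bNode l r) else 0.
  transitivity (\sum_(i < m.+1 | (bsize r == (m - i)%N) && (i == bsize l :> nat))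
                  F (bNode l r)).
    rewrite [RHS]big_mkcond; apply: eq_bigr => i _ /=.
    by rewrite (eq_sym (bsize l)); case: eqP; case: eqP.
  rewrite (big_ord1_cond_eq _ (fun=> F (bNode l r)) (fun i => bsize r == (m - i)%N)).
  by congr (if _ then _ else _) => /=; apply/idP/idP; lia.
rewrite (big_BPT_n_upto _ (leqnn m.+1)) trees_uptoS big_cons -[X in X + _]/(0 : K) add0r.
rewrite big_allpairs_dep.
under [RHS]eq_bigr => i _.
  rewrite (big_BPT_n_upto _ (ltnSE (ltn_ord i))).
  under eq_bigr => l _ do rewrite (big_BPT_n_upto _ (leq_subr i m)) if_sum.
  over.
rewrite [RHS]exchange_big /=; apply: eq_bigr => l _; rewrite [RHS]exchange_big /=.
by apply: eq_bigr => r _; rewrite split_size.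
Qed.

Definition bpt_series (F : bpt -> K) : fps K := fun n => \sum_(T <- BPT_n n) F T.

Lemma fps_mul_bpt_series f g m :
  fps_mul (bpt_series f) (bpt_series g) m =
  \sum_(i < m.+1) \sum_(l <- BPT_n i) \sum_(r <- BPT_n (m - i)) f l * g r.
Proof.
by apply: eq_bigr => i _; rewrite big_distrl; apply: eq_bigr => l _; rewrite big_distrr.
Qed.

Lemma sum_Branch_n_eq S n (y : K) : (bsize S <= n)%N ->
  \sum_(k < n.+1) \sum_(B <- Branch_n k) (if S == B then y else 0) =
  if is_branch S then y else 0.
Proof.
move=> le_Sn; under eq_bigr => k _ do rewrite sum_if_eq_uniq ?uniq_Branch_n // mem_Branch_n.
case: (is_branch S); last by rewrite big1 // => k _; rewrite andbF.
rewrite -big_mkcond (eq_bigl (fun k : 'I_n.+1 => k == bsize S :> nat)) => [|k].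
  by rewrite big_ord1_eq ltnS le_Sn.
by rewrite andbT eq_sym.
Qed.
End BPTSums.

Section FormalPowerSeries.
Variable K : comPzRingType.
Implicit Types f g h u : fps K.

Local Notation fps1 := (@fps_one K).
Local Notation X := (@fps_X K).

Definition fps_add f g : fps K := fun n => f n + g n.

Lemma big_ord_geq_shift (F : nat -> K) n i : (i <= n)%N ->
  \sum_(a < n.+1 | (i <= a)%N) F a = \sum_(j < (n - i).+1) F (i + j)%N.
Proof.
move=> le_in; rewrite -(big_geq_mkord i n.+1 predT) -{1}(add0n i) big_addn big_mkord.
by rewrite -subSn //; apply: eq_bigr => j _; rewrite addnC.
Qed.

Lemma fps_mulX f n : fps_mul X f n = if n is n'.+1 then f n' else 0.
Proof.
rewrite /fps_mul; case: n => [|n].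
  by rewrite big_ord_recl big_ord0 /fps_X mul0r addr0.
rewrite 2!big_ord_recl big1 => [|i _]; last by rewrite /fps_X mul0r.
by rewrite /fps_X /= mul0r mul1r add0r addr0 subn1.
Qed.

Lemma fps_mul1l f : fps_mul fps1 f = f.
Proof.
apply: functional_extensionality => n; rewrite /fps_mul big_ord_recl /= mul1r subn0.
by rewrite big1 ?addr0 // => i _; rewrite /fps_one /= mul0r.
Qed.

Lemma fps_mulC f g : fps_mul f g = fps_mul g f.
Proof.
apply: functional_extensionality => n; rewrite /fps_mul (reindex_inj rev_ord_inj) /=.
by apply: eq_bigr => i _; rewrite subSS subKn 1?mulrC // -ltnS.
Qed.

Lemma fps_mulDl f g h : fps_mul (fps_add f g) h = fps_add (fps_mul f h) (fps_mul g h).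
Proof.
apply: functional_extensionality => n; rewrite /fps_mul /fps_add -big_split /=.
by apply: eq_bigr => i _; rewrite mulrDl.
Qed.

Lemma fps_mulA f g h : fps_mul f (fps_mul g h) = fps_mul (fps_mul f g) h.
Proof.
apply: functional_extensionality => n; rewrite /fps_mul.
under [RHS]eq_bigr => a _ do
  rewrite big_distrl (big_ord_widen _ (fun i => f i * g (a - i)%N * h (n - a)%N) (ltn_ord a)).
rewrite (exchange_big_dep predT) //=; apply: eq_bigr => i _.
have le_in : (i <= n)%N := ltn_ord i.
under [RHS]eq_bigl => a do rewrite ltnS.
rewrite big_distrr (big_ord_geq_shift (fun a => f i * g (a - i)%N * h (n - a)%N) le_in).
by apply: eq_bigr => j _ /=; rewrite mulrA addKn subnDA.
Qed.

Lemma fps_powD f a b : fps_pow f (a + b) = fps_mul (fps_pow f a) (fps_pow f b).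
Proof. by elim: a => [|a IH] /=; rewrite ?fps_mul1l // IH fps_mulA. Qed.

Lemma fps_pow_coef_lt u j n : u 0%N = 0 -> (n < j)%N -> fps_pow u j n = 0.
Proof.
move=> u0; elim: j n => [|j IH] n //= lt_nj; rewrite /fps_mul big1 // => -[[|i] lt_in] _ /=.
  by rewrite u0 mul0r.
by rewrite IH ?mulr0 //; lia.
Qed.

Lemma fps_inv1_subE u n N : u 0%N = 0 -> (n <= N)%N ->
  fps_inv1 (fps_sub fps1 u) n = \sum_(j < N.+1) fps_pow u j n.
Proof.
move=> u0 le_nN; rewrite /fps_inv1; have -> : fps_sub fps1 (fps_sub fps1 u) = u.
  by apply: functional_extensionality => k; rewrite /fps_sub opprB addrC subrK.
rewrite (big_ord_widen N.+1 (fun j => fps_pow u j n)) // big_mkcond /=.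
by apply: eq_bigr => j _; case: ltnP => // lt_nj; rewrite fps_pow_coef_lt.
Qed.

Lemma fps_inv1_fixpoint u : u 0%N = 0 ->
  fps_inv1 (fps_sub fps1 u) = fps_add (fps_mul u (fps_inv1 (fps_sub fps1 u))) fps1.
Proof.
move=> u0; apply: functional_extensionality => n.
rewrite (fps_inv1_subE u0 (leqnSn n)) big_ord_recl addrC /fps_add; congr (_ + _).
rewrite /fps_mul; under [RHS]eq_bigr => i _ do rewrite (fps_inv1_subE u0 (leq_subr i n)).
by rewrite /= exchange_big /=; apply: eq_bigr => j _; rewrite big_distrr.
Qed.

Lemma fps_fixpoint_uniq T g f1 f2 :
  f1 = fps_mul X (fps_add (fps_mul f1 T) g) ->
  f2 = fps_mul X (fps_add (fps_mul f2 T) g) -> f1 = f2.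
Proof.
move=> E1 E2; apply: functional_extensionality => k.
elim: k {-2}k (leqnn k) => [|n IH] [|k] le_kn //; rewrite E1 E2 !fps_mulX //.
rewrite /fps_add /fps_mul; congr (_ + _); apply: eq_bigr => i _.
by rewrite IH //; have := ltn_ord i; lia.
Qed.

Definition vertex_series T : fps K := fps_mul X (fps_inv1 (fps_sub fps1 (fps_mul X T))).

Lemma vertex_series_fixpoint T g :
  fps_mul (vertex_series T) g =
  fps_mul X (fps_add (fps_mul (fps_mul (vertex_series T) g) T) g).
Proof.
rewrite /vertex_series; set u := fps_mul X T; set I := fps_inv1 _.
have u0 : u 0%N = 0 by rewrite /u fps_mulX.
rewrite -!fps_mulA; congr (fps_mul X _).
rewrite {1}/I fps_inv1_fixpoint // -/I fps_mulDl fps_mul1l; congr (fps_add _ g).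
by rewrite /u -!fps_mulA (fps_mulC T) -fps_mulA.
Qed.

End FormalPowerSeries.

Fixpoint spine (T : bpt) : bpt :=
  match T with
  | bLeaf => bLeaf
  | bNode l r => if nonempty l && nonempty r then spine l else bNode (spine l) (spine r)
  end.

Fixpoint plug (d : seq bool) (S : bpt) : bpt :=
  match d with
  | [::] => S
  | b :: d' => if b then bNode bLeaf (plug d' S) else bNode (plug d' S) bLeaf
  end.

Lemma plug_rcons d b S :
  plug (rcons d b) S = plug d (if b then bNode bLeaf S else bNode S bLeaf).
Proof. by elim: d => //= c d ->. Qed.

Lemma insertion_plug d l r : insertion (plug d l) d r = plug d (bNode l r).
Proof. by elim: d => [|[] d IH] /=; rewrite ?IH //; case: l. Qed.

Lemma is_vertex_plug d S : nonempty S -> is_vertex (plug d S) d.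
Proof. by rewrite /is_vertex; elim: d => [|[] d IH] //; case: S. Qed.

Lemma nonempty_plug d S : nonempty S -> nonempty (plug d S).
Proof. by case: d => [|[] d]. Qed.

Lemma nonempty_spine T : nonempty (spine T) = nonempty T.
Proof. by elim: T => //= l IHl r _; case: ifP => // /andP[ne_l _]; rewrite IHl. Qed.

Lemma allowed_branch_spine T : allowed_branch (spine T).
Proof.
elim: T => //= l IHl r IHr; case: ifP => // /negbT H /=.
by rewrite !nonempty_spine H IHl IHr.
Qed.

Lemma is_branch_spine T : is_branch (spine T) = nonempty T.
Proof. by rewrite /is_branch allowed_branch_spine nonempty_spine andbT. Qed.

Lemma bsize_spine T : (bsize (spine T) <= bsize T)%N.
Proof. by elim: T => //= l IHl r IHr; case: ifP => _ /=; lia. Qed.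

Lemma eq_bNode l r l' r' : (bNode l r == bNode l' r') = (l == l') && (r == r').
Proof. by []. Qed.

Section Troupe.
Variables (K : comPzRingType) (tau : bpt -> K).
Hypothesis tau_troupe : weighted_troupe tau.

Let tau_leaf : tau bLeaf = 0 := proj1 tau_troupe.

Fixpoint pruned_weight (T : bpt) : K :=
  match T with
  | bLeaf => 1
  | bNode l r =>
      if nonempty l && nonempty r then pruned_weight l * tau r
      else pruned_weight l * pruned_weight r
  end.

Lemma tau_plug_spine d T : tau (plug d T) = tau (plug d (spine T)) * pruned_weight T.
Proof.
elim: T d => [|l IHl r IHr] d /=; first by rewrite mulr1.
have [-> | ne_r] := eqVneq r bLeaf.
  by rewrite andbF /= mulr1 -(plug_rcons d false) IHl plug_rcons.
have [-> | ne_l] := eqVneq l bLeaf.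
  by rewrite /= mul1r -(plug_rcons d true) IHr plug_rcons.
rewrite !nonemptyE ne_l ne_r /= -insertion_plug (proj2 tau_troupe) ?nonemptyE //.
- by rewrite IHl mulrA.
- by rewrite -nonemptyE nonempty_plug ?nonemptyE.
- by apply: is_vertex_plug; rewrite nonemptyE.
Qed.

Lemma tau_spine T : tau T = tau (spine T) * pruned_weight T.
Proof. exact: tau_plug_spine [::] T. Qed.

Lemma tree_seriesE : tree_series tau = bpt_series tau.
Proof.
by apply: functional_extensionality => -[|n] //; rewrite /bpt_series BPT_n0 big_seq1.
Qed.

Lemma branch_seriesE n : branch_series tau n = \sum_(B <- Branch_n n) tau B.
Proof. by case: n => //; rewrite (_ : Branch_n 0 = [::]) // big_nil. Qed.

Definition fibre_series (B : bpt) : fps K :=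
  bpt_series (fun T => if spine T == B then pruned_weight T else 0).

Lemma fibre_series_leaf : fibre_series bLeaf = @fps_one K.
Proof.
rewrite /fibre_series /bpt_series; apply: functional_extensionality => -[|n].
  by rewrite BPT_n0 big_seq1.
rewrite big1_seq // => T /andP[_ T_n].
by rewrite -[spine T == _]negbK -nonemptyE nonempty_spine (nonempty_BPT_n T_n).
Qed.

Lemma fibre_summand_node Bl Br l r : allowed_branch (bNode Bl Br) ->
  (if spine (bNode l r) == bNode Bl Br then pruned_weight (bNode l r) else 0) =
  (if spine l == bNode Bl Br then pruned_weight l else 0) * tau r +
  (if spine l == Bl then pruned_weight l else 0) *
    (if spine r == Br then pruned_weight r else 0).
Proof.
move=> /andP[/andP[not_both _] _].
have [-> | ne_l] := eqVneq l bLeaf.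
  rewrite /= mul0r add0r eq_bNode.
  by case: (_ == Bl); case: (_ == Br); rewrite ?mul1r ?mul0r.
have [-> | ne_r] := eqVneq r bLeaf.
  rewrite /= tau_leaf andbF mulr0 add0r mulr1 eq_bNode.
  by case: (_ == Bl); case: (_ == Br); rewrite ?mulr1 ?mulr0.
rewrite /= !nonemptyE ne_l ne_r /= addrC.
suff -> : (if spine l == Bl then pruned_weight l else 0) *
          (if spine r == Br then pruned_weight r else 0) = 0.
  by rewrite add0r; case: ifP; rewrite ?mul0r.
case: eqP => [sl | _]; last by rewrite mul0r.
case: eqP => [sr | _]; last by rewrite mulr0.
by move: not_both; rewrite -sl -sr !nonempty_spine !nonemptyE ne_l ne_r.
Qed.

Lemma fibre_series_node Bl Br : allowed_branch (bNode Bl Br) ->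
  fibre_series (bNode Bl Br) =
  fps_mul (@fps_X K) (fps_add (fps_mul (fibre_series (bNode Bl Br)) (bpt_series tau))
                              (fps_mul (fibre_series Bl) (fibre_series Br))).
Proof.
move=> branch_B; apply: functional_extensionality => -[|m]; rewrite fps_mulX.
  by rewrite /fibre_series /bpt_series BPT_n0 big_seq1.
rewrite /fps_add !fps_mul_bpt_series -!big_split /fibre_series /bpt_series big_BPT_nS.
apply: eq_bigr => i _; rewrite -big_split; apply: eq_bigr => l _.
by rewrite -big_split; apply: eq_bigr => r _; rewrite fibre_summand_node.
Qed.

Lemma fibre_series_branch B : allowed_branch B ->
  fibre_series B = fps_pow (vertex_series (bpt_series tau)) (bsize B).
Proof.
elim: B => [|Bl IHl Br IHr] branch_B; first exact: fibre_series_leaf.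
have /andP[/andP[_ branch_l] branch_r] := branch_B.
rewrite /= fps_powD -IHl // -IHr //.
exact: fps_fixpoint_uniq (fibre_series_node branch_B) (vertex_series_fixpoint _ _).
Qed.

Lemma bpt_series_by_spine n :
  bpt_series tau n = \sum_(k < n.+1) \sum_(B <- Branch_n k) tau B * fibre_series B n.
Proof.
have tau_by_branches T : T \in BPT_n n ->
    tau T = \sum_(k < n.+1) \sum_(B <- Branch_n k)
              (if spine T == B then tau B * pruned_weight T else 0).
  move=> T_n; transitivity (\sum_(k < n.+1) \sum_(B <- Branch_n k)
              (if spine T == B then tau (spine T) * pruned_weight T else 0)); last first.
    by apply: eq_bigr => k _; apply: eq_bigr => B _; case: eqP => // ->.
  rewrite {1}tau_spine sum_Branch_n_eq ?is_branch_spine; last first.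
    by move: T_n; rewrite mem_BPT_n => /eqP <-; apply: bsize_spine.
  by case: (T) => //; rewrite /= tau_leaf mul0r.
rewrite /bpt_series (eq_big_seq _ tau_by_branches) exchange_big; apply: eq_bigr => k _.
rewrite exchange_big; apply: eq_bigr => B _; rewrite /fibre_series /bpt_series big_distrr.
by apply: eq_bigr => T _ /=; case: eqP; rewrite ?mulr0.
Qed.

End Troupe.

Theorem theorem5p1 (K : comPzRingType) (tau : bpt -> K) :
  weighted_troupe tau ->
  tree_series tau =
  fps_comp (branch_series tau)
    (fps_mul (@fps_X K)
       (fps_inv1 (fps_sub (@fps_one K) (fps_mul (@fps_X K) (tree_series tau))))).
Proof.
move=> tau_troupe; rewrite (tree_seriesE tau_troupe).
apply: functional_extensionality => n; rewrite bpt_series_by_spine //.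
apply: eq_bigr => k _; rewrite branch_seriesE big_distrl; apply: eq_big_seq => B.
rewrite mem_Branch_n => /andP[/eqP <- /andP[_ branch_B]].
by rewrite fibre_series_branch.
Qed.
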